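(* Let $M$ be a matroid. If $M$ has two distinct bases that are disjoint, or its dual $M^\star$ has two distinct bases that are disjoint, then $M$ has the Borsuk property.
   Context: All matroids are finite. For a matroid $M$, $\mathcal{B}(M)$ denotes its set of bases, and the distance between two bases $B,B'$ is $|B\triangle B'|$ (symmetric difference); $\operatorname{diam}$ denotes the diameter with respect to this distance. The Borsuk number $f(M)$ is the minimum number of parts in a partition of $\mathcal{B}(M)$ in which every part has diameter strictly smaller than $\operatorname{diam}(\mathcal{B}(M))$; if $M$ has exactly one basis, $f(M):=+\infty$. If $M$ has $n$ elements and $c$ connected components, $M$ has the Borsuk property if $f(M)\le n-c+1$. *)

From mathcomp Require Import all_boot.
Set Implicit Arguments.
Unset Strict Implicit.
Unset Printing Implicit Defensive.

Section Matroid.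
Variable E : finType.

Definition matroid_bases (B : {set {set E}}) : Prop :=
  B != set0 /\
  forall B1 B2, B1 \in B -> B2 \in B -> forall x, x \in B1 :\: B2 ->
    exists2 y, y \in B2 :\: B1 & (y |: (B1 :\ x)) \in B.

Definition dual_bases (B : {set {set E}}) : {set {set E}} :=
  [set ~: X | X in B].

Definition independent (B : {set {set E}}) (I : {set E}) : bool :=
  [exists X in B, I \subset X].

Definition circuit (B : {set {set E}}) (C : {set E}) : bool :=
  ~~ independent B C && [forall D : {set E}, (D \proper C) ==> independent B D].

Definition same_comp (B : {set {set E}}) (x y : E) : bool :=
  (x == y) || [exists C, circuit B C && (x \in C) && (y \in C)].

Definition ncomp (B : {set {set E}}) : nat :=
  #|[set [set y | same_comp B x y] | x : E]|.

Definition bdist (X Y : {set E}) : nat := #|(X :\: Y) :|: (Y :\: X)|.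

Definition diam (A : {set {set E}}) : nat :=
  \max_(X in A) \max_(Y in A) bdist X Y.

(* f(M) <= m : some partition of the bases into at most m parts,
   each of diameter strictly smaller than diam(B(M)). *)
Definition borsuk_le (B : {set {set E}}) (m : nat) : Prop :=
  exists P : {set {set {set E}}},
    [/\ partition P B, #|P| <= m & forall A, A \in P -> diam A < diam B].

Definition borsuk_property (B : {set {set E}}) : Prop :=
  borsuk_le B (#|E| - ncomp B + 1).

Definition has_two_disjoint_bases (B : {set {set E}}) : Prop :=
  exists B1 B2, [/\ B1 \in B, B2 \in B, B1 != B2 & [disjoint B1 & B2]].

End Matroid.

(* Fix x in a base X1 and let K be its connected component. Every base X meets K:
   otherwise the fundamental circuit of x in x + X lies in both K and x + X, hence
   in {x}, which is independent. Labelling each base by an element of X in K splits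
   the bases into at most |K| <= n - c + 1 classes (the other c - 1 components lie
   outside K), and two bases sharing an element are at distance at most 2r - 2 < 2r,
   the distance of two disjoint bases. For the dual, take x outside X1: no base
   contains K, since K contains the fundamental circuit of x with respect to X1, and
   the same count applies to complements of bases. *)
From mathcomp Require Import all_boot zify.
Set Implicit Arguments.
Unset Strict Implicit.
Unset Printing Implicit Defensive.

Section SetFamilies.
Variable E : finType.
Implicit Types (A : {set {set E}}) (X Y : {set E}).

Lemma bdist_setC X Y : bdist (~: X) (~: Y) = bdist X Y.
Proof.
by rewrite /bdist setUC; congr #|_ :|: _|; apply/setP => z; rewrite !inE negbK andbC.
Qed.

Lemma bdist_disjoint X Y : [disjoint X & Y] -> bdist X Y = #|X| + #|Y|.
Proof.
move=> dXY; have dYX : [disjoint Y & X] by rewrite disjoint_sym.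
by rewrite /bdist (setDidPl dXY) (setDidPl dYX); apply/eqP; rewrite leq_card_setU.
Qed.

Lemma bdist_le_common X Y z : z \in X -> z \in Y -> bdist X Y <= #|X|.-1 + #|Y|.-1.
Proof.
move=> zX zY; apply: leq_trans (leq_card_setU _ _) _.
rewrite (cardsD1 z X) (cardsD1 z Y) zX zY !add1n.
by apply: leq_add; apply: subset_leq_card; apply/subsetP => y; rewrite !inE;
  case/andP => yZ ->; rewrite andbT; apply: contraNneq yZ => ->.
Qed.

Lemma bdist_le_diam A X Y : X \in A -> Y \in A -> bdist X Y <= diam A.
Proof.
by move=> hX hY; apply: leq_trans (leq_bigmax_cond _ hX); apply: leq_bigmax_cond hY.
Qed.

Lemma borsuk_le_classifier A (K : {set E}) (g : {set E} -> E) :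
  {in A, forall X, g X \in K} ->
  {in A &, forall X Y, g X = g Y -> bdist X Y < diam A} ->
  borsuk_le A #|K|.
Proof.
move=> gK gdist; exists (preim_partition g A); split.
- exact: preim_partitionP.
- pose fibre z := [set X in A | z == g X].
  have sub : preim_partition g A \subset fibre @: K.
    by apply/subsetP => _ /imsetP[X hX ->]; rewrite imset_f ?gK.
  exact: leq_trans (subset_leq_card sub) (leq_imset_card _ _).
- move=> _ /imsetP[X0 hX0 ->].
  have dA : 0 < diam A := leq_ltn_trans (leq0n _) (gdist _ _ hX0 hX0 erefl).
  rewrite -(prednK dA) ltnS.
  apply/bigmax_leqP => X; rewrite inE => /andP[hX /eqP eX].
  apply/bigmax_leqP => Y; rewrite inE => /andP[hY /eqP eY].
  by rewrite -ltnS prednK // gdist // -eX -eY.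
Qed.

Lemma borsuk_leW A m n : m <= n -> borsuk_le A m -> borsuk_le A n.
Proof. by move=> mn [P [pP cP dP]]; exists P; split=> //; apply: leq_trans mn. Qed.

End SetFamilies.

Section MatroidTheory.
Variables (E : finType) (B : {set {set E}}).
Hypothesis B_matroid : matroid_bases B.
Implicit Types (C D I J X Y : {set E}) (e f x y z : E).

Lemma basis_subset_eq X Y : X \in B -> Y \in B -> X \subset Y -> X = Y.
Proof.
move=> hX hY sXY; apply/eqP; rewrite eqEsubset sXY /=.
apply/subsetP => y yY; apply/negPn/negP => yX.
have yYX : y \in Y :\: X by rewrite inE yX yY.
have [z] := B_matroid.2 Y X hY hX y yYX.
by rewrite inE => /andP[/negP zY /(subsetP sXY)].
Qed.

Lemma card_bases X Y : X \in B -> Y \in B -> #|X| = #|Y|.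
Proof.
move=> hX hY; elim: {X}#|X :\: Y| {-2}X hX (erefl #|X :\: Y|) => [|k IH] X hX hk.
  by move/eqP: hk; rewrite eq_sym cards_eq0 setD_eq0 => /(basis_subset_eq hX hY) ->.
have /set0Pn[x xXY] : X :\: Y != set0 by rewrite -cards_eq0 -hk.
have [y yYX hX'] := B_matroid.2 X Y hX hY x xXY.
move: xXY yYX; rewrite !inE => /andP[xY xX] /andP[yX yY].
rewrite -(IH _ hX'); first by rewrite cardsU1 !inE (negbTE yX) andbF (cardsD1 x X) xX.
have -> : (y |: (X :\ x)) :\: Y = (X :\: Y) :\ x.
  apply/setP => z; rewrite !inE; case: (z =P y) => [->|_]; first by rewrite yY andbF.
  by case: (z \in X); case: (z \in Y); case: (z == x).
by move: hk; rewrite (cardsD1 x (X :\: Y)) !inE xY xX => -[].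
Qed.

Lemma extend_to_basis (I X0 Y : {set E}) : X0 \in B -> I \subset X0 -> Y \in B ->
  exists2 X, X \in B & (I \subset X) && (X \subset I :|: Y).
Proof.
move=> + + hY.
elim: #|X0 :\: (I :|: Y)| {-2}X0 (erefl #|X0 :\: (I :|: Y)|)
  => [|k IH] {}X0 hk hX0 sI.
  by exists X0; rewrite // sI -setD_eq0 -cards_eq0 hk.
have /set0Pn[x xX] : X0 :\: (I :|: Y) != set0 by rewrite -cards_eq0 hk.
move: (xX); rewrite !inE => /andP[/norP[xI xY] xX0].
have xX0Y : x \in X0 :\: Y by rewrite inE xY xX0.
have [y yYX hX'] := B_matroid.2 X0 Y hX0 hY x xX0Y.
move: yYX; rewrite !inE => /andP[yX0 yY].
apply: (IH _ _ hX').
- have -> : (y |: (X0 :\ x)) :\: (I :|: Y) = (X0 :\: (I :|: Y)) :\ x.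
    apply/setP => z; rewrite !inE; case: (z =P y) => [->|_]; first by rewrite yY orbT andbF.
    by case: (z \in X0); case: (z \in Y); case: (z == x); case: (z \in I).
  by move: hk; rewrite (cardsD1 x (X0 :\: (I :|: Y))) xX => -[].
- apply/subsetP => z zI; rewrite !inE (subsetP sI) // andbT.
  by apply/orP; right; apply: contraNneq xI => <-.
Qed.

Lemma independentS (I J : {set E}) : I \subset J -> independent B J -> independent B I.
Proof.
move=> sIJ /existsP[X /andP[hX sJX]]; apply/existsP; exists X.
by rewrite hX (subset_trans sIJ sJX).
Qed.

Lemma basis_independent X : X \in B -> independent B X.
Proof. by move=> hX; apply/existsP; exists X; rewrite hX subxx. Qed.

Lemma circuit_dependent C : circuit B C -> ~~ independent B C.
Proof. by case/andP. Qed.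

Lemma circuit_not_subset_basis C X : circuit B C -> X \in B -> ~~ (C \subset X).
Proof.
move=> cC hX; apply: contra (circuit_dependent cC) => sCX.
exact: independentS sCX (basis_independent hX).
Qed.

Lemma circuit_proper_independent C D :
  circuit B C -> D \proper C -> independent B D.
Proof. by case/andP=> _ /forallP /(_ D) /implyP. Qed.

Lemma circuit_minset C :
  circuit B C = minset (fun D => ~~ independent B D) C.
Proof.
apply/andP/minsetP => [[dC /forallP minC] | [dC minC]]; split=> //.
  move=> D dD sDC; apply/eqP; apply: contraNT dD => nDC.
  by apply: (implyP (minC D)); rewrite properEneq nDC.
apply/forallP => D; apply/implyP => pDC; have [//|dD] := boolP (independent B D).
by move: (pDC); rewrite (minC D dD (proper_sub pDC)) properxx.
Qed.

Lemma circuit_subset_eq C D : circuit B C -> circuit B D -> D \subset C -> D = C.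
Proof. by rewrite !circuit_minset => /minsetinf mC /minsetp; apply: mC. Qed.

Lemma dependent_has_circuit D :
  ~~ independent B D -> exists2 C, circuit B C & C \subset D.
Proof.
move=> dD; have [C] := @minset_exists _ (fun D => ~~ independent B D) D dD.
by rewrite -circuit_minset; exists C.
Qed.

Lemma circuit_subsetU1_basis C X e :
  circuit B C -> X \in B -> C \subset e |: X -> e \in C.
Proof.
move=> cC hX sCeX; apply: contraR (circuit_not_subset_basis cC hX) => eC.
apply/subsetP => z zC; move/subsetP/(_ z zC): sCeX; rewrite !inE.
by case/orP => // /eqP ze; rewrite -ze zC in eC.
Qed.

Lemma fundamental_circuit_unique X e C1 C2 : X \in B -> e \notin X ->
  circuit B C1 -> circuit B C2 -> C1 \subset e |: X -> C2 \subset e |: X ->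
  C1 = C2.
Proof.
move=> hX eX c1 c2 s1 s2; apply/eqP; apply/negPn/negP => n12.
have e2 := circuit_subsetU1_basis c2 hX s2.
have /subsetPn[f f1 f2] : ~~ (C1 \subset C2).
  by apply: contra n12 => s12; rewrite (circuit_subset_eq c2 c1 s12).
have fX : f \in X.
  move/subsetP/(_ f f1): s1; rewrite !inE => /orP[/eqP fe|//].
  by rewrite fe e2 in f2.
have /existsP[X0 /andP[hX0 sX0]] : independent B (C1 :\ f).
  exact: circuit_proper_independent c1 (properD1 f1).
have [Y hY /andP[sC1Y sYX]] := extend_to_basis hX0 sX0 hX.
have fY : f \notin Y.
  apply: contra (circuit_not_subset_basis c1 hY) => fY.
  by apply/subsetP => z zC1; have [->//|zf] := eqVneq z f; rewrite (subsetP sC1Y) // !inE zf.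
have sYeXf : Y \subset (e |: X) :\ f.
  apply/subsetP => z zY; rewrite !inE; apply/andP; split; first by apply: contraNneq fY => <-.
  move/subsetP/(_ z zY): sYX; rewrite !inE => /orP[/andP[_ /(subsetP s1)]|->]; last by rewrite orbT.
  by rewrite !inE.
have eqY : Y = (e |: X) :\ f.
  apply/eqP; rewrite eqEcard sYeXf (card_bases hY hX) andTb.
  have cX : #|e |: X| = #|X|.+1 by rewrite cardsU1 eX.
  by have := cardsD1 f (e |: X); rewrite cX in_setU1 fX orbT => -[->].
move/negP: (circuit_not_subset_basis c2 hY); apply; rewrite eqY.
apply/subsetP => z zC2; rewrite in_setD1 (subsetP s2 z zC2) andbT.
by apply: contraNneq f2 => <-.
Qed.

Lemma circuit_elim C1 C2 e : circuit B C1 -> circuit B C2 -> C1 != C2 ->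
  e \in C1 -> e \in C2 -> ~~ independent B ((C1 :|: C2) :\ e).
Proof.
move=> c1 c2 n12 e1 e2; apply/negP => /existsP[X /andP[hX sX]].
have eX : e \notin X.
  apply: contra (circuit_not_subset_basis c1 hX) => eX.
  by apply/subsetP => z zC; have [->//|ze] := eqVneq z e; rewrite (subsetP sX) // !inE ze zC.
have sUeX C : C \subset C1 :|: C2 -> C \subset e |: X.
  move=> sC; apply/subsetP => z zC; rewrite in_setU1; have [//|ze /=] := eqVneq z e.
  by rewrite (subsetP sX) // in_setD1 ze (subsetP sC).
move: n12; rewrite (fundamental_circuit_unique hX eX c1 c2) ?eqxx //; apply: sUeX.
  exact: subsetUl.
exact: subsetUr.
Qed.

Lemma circuit_strong_elim C1 C2 e f : circuit B C1 -> circuit B C2 ->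
  e \in C1 -> e \in C2 -> f \in C1 -> f \notin C2 ->
  exists2 C, circuit B C & (f \in C) && (C \subset (C1 :|: C2) :\ e).
Proof.
have [n] := ubnP #|C1 :|: C2|; elim: n => // n IH in C1 C2 e f *.
rewrite ltnS => size12 c1 c2 e1 e2 f1 f2.
have n12 : C1 != C2 by apply: contraNneq f2 => <-.
have [C3 c3 s3] := dependent_has_circuit (circuit_elim c1 c2 n12 e1 e2).
have [f3|f3] := boolP (f \in C3); first by exists C3; rewrite ?f3.
have s3U : C3 \subset C1 :|: C2 := subset_trans s3 (subsetDl _ _).
have e3 : e \notin C3 by apply/negP => /(subsetP s3); rewrite !inE eqxx.
have /subsetPn[g g3 g1] : ~~ (C3 \subset C1).
  by apply: contraNN e3 => /(circuit_subset_eq c1 c3) ->.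
have g2 : g \in C2 by move: (subsetP s3U g g3); rewrite inE (negbTE g1).
have lt23 : #|C2 :|: C3| < #|C1 :|: C2|.
  apply: proper_card; rewrite properEneq subUset subsetUr s3U !andbT.
  by apply/eqP => /setP /(_ f); rewrite !inE f1 (negbTE f2) (negbTE f3).
have [C4 c4 /andP[e4 s4]] := IH C2 C3 g e (leq_trans lt23 size12) c2 c3 g2 g3 e2 e3.
have s4U : C4 \subset C1 :|: C2.
  apply: subset_trans s4 _; apply: subset_trans (subsetDl _ _) _.
  by rewrite subUset subsetUr s3U.
have f4 : f \notin C4.
  by apply: contraNN f2 => /(subsetP s4); rewrite !inE (negbTE f3) orbF => /andP[].
have lt14 : #|C1 :|: C4| < #|C1 :|: C2|.
  apply: proper_card; rewrite properEneq subUset subsetUl s4U !andbT.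
  apply/eqP => /setP /(_ g); rewrite !inE g2 orbT (negbTE g1) /=.
  by move/(subsetP s4); rewrite !inE eqxx.
have [C5 c5 /andP[f5 s5]] := IH C1 C4 e f (leq_trans lt14 size12) c1 c4 e1 e4 f1 f4.
exists C5; rewrite // f5 /=; apply: subset_trans s5 _.
by apply: setSD; rewrite subUset subsetUl s4U.
Qed.

Lemma circuit_connect C1 C2 x z : circuit B C1 -> circuit B C2 ->
  x \in C1 -> z \in C2 -> C1 :&: C2 != set0 ->
  exists2 C, circuit B C & (x \in C) && (z \in C).
Proof.
move=> c1 + x1; have [z1 _ _ _|z1] := boolP (z \in C1); first by exists C1; rewrite ?x1.
have [n] := ubnP #|C2 :\: C1|; elim: n => // n IH in C2 *.
rewrite ltnS => sizeC2 c2 z2 /set0Pn[w]; rewrite inE => /andP[w1 w2].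
have [x2|x2] := boolP (x \in C2); first by exists C2; rewrite ?x2.
have [C3 c3 /andP[x3 s3]] := circuit_strong_elim c1 c2 w1 w2 x1 x2.
have [z3|z3] := boolP (z \in C3); first by exists C3; rewrite ?x3.
have w3 : w \notin C3 by apply/negP => /(subsetP s3); rewrite !inE eqxx.
have /subsetPn[u u3 u1] : ~~ (C3 \subset C1).
  by apply: contraNN w3 => /(circuit_subset_eq c1 c3) ->.
have u2 : u \in C2 by move: (subsetP s3 u u3); rewrite !inE (negbTE u1) => /andP[].
have [C4 c4 /andP[z4 s4]] := circuit_strong_elim c2 c3 u2 u3 z2 z3.
have outside4 y : y \in C4 -> y \notin C1 -> y \in C2 :\ u.
  move=> y4 y1; move: (subsetP s4 y y4); rewrite !inE => /andP[-> /orP[//|y3]].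
  by move: (subsetP s3 y y3); rewrite !inE (negbTE y1) => /andP[].
apply: (IH C4) => //.
  apply: leq_trans sizeC2; rewrite (cardsD1 u (C2 :\: C1)) !inE u1 u2 add1n ltnS.
  apply: subset_leq_card; apply/subsetP => y; rewrite !inE => /andP[y1 /outside4 /(_ y1)].
  by rewrite !inE y1 => /andP[-> ->].
apply: contraT => /negPn/eqP disj14.
have sC42 : C4 \subset C2.
  apply/subsetP => y y4; suff y1 : y \notin C1 by case/setD1P: (outside4 y y4 y1).
  by apply: contraFN (in_set0 y) => y1; rewrite -disj14 inE y1 y4.
by move: (in_set0 w); rewrite -disj14 (circuit_subset_eq c2 c4 sC42) inE w1 w2.
Qed.

Lemma same_comp_sym x y : same_comp B x y = same_comp B y x.
Proof.
rewrite /same_comp eq_sym; congr (_ || _).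
by apply/existsP/existsP => -[C /andP[/andP[cC xC] yC]]; exists C; rewrite cC xC yC.
Qed.

Lemma same_comp_trans x y z : same_comp B x y -> same_comp B y z -> same_comp B x z.
Proof.
rewrite /same_comp => /orP[/eqP -> //|/existsP[C1 /andP[/andP[c1 x1] y1]]].
case/orP => [/eqP <-|/existsP[C2 /andP[/andP[c2 y2] z2]]].
  by apply/orP; right; apply/existsP; exists C1; rewrite c1 x1 y1.
have meet12 : C1 :&: C2 != set0 by apply/set0Pn; exists y; rewrite inE y1 y2.
have [C cC /andP[xC zC]] := circuit_connect c1 c2 x1 z2 meet12.
by apply/orP; right; apply/existsP; exists C; rewrite cC xC zC.
Qed.

Definition component x := [set y | same_comp B x y].

Lemma component_eq x z : same_comp B x z -> component z = component x.
Proof.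
move=> xz; apply/setP => y; rewrite !inE; apply/idP/idP; first exact: same_comp_trans.
by apply: same_comp_trans; rewrite same_comp_sym.
Qed.

Lemma circuit_sub_component C x : circuit B C -> x \in C -> C \subset component x.
Proof.
move=> cC xC; apply/subsetP => y yC; rewrite inE /same_comp.
by apply/orP; right; apply/existsP; exists C; rewrite cC xC yC.
Qed.

Lemma ncomp_le_componentC x : ncomp B <= #|~: component x| + 1.
Proof.
have sub : [set component z | z : E] \subset component x |: (component @: ~: component x).
  apply/subsetP => _ /imsetP[z _ ->]; rewrite !inE.
  have [zx|zx] := boolP (z \in component x); last by rewrite imset_f ?orbT // inE.
  by rewrite (component_eq (_ : same_comp B x z)) ?eqxx //; rewrite inE in zx.
apply: leq_trans (subset_leq_card sub) _; rewrite cardsU1 addnC leq_add //.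
  exact: leq_imset_card.
by case: (_ \notin _).
Qed.

Lemma fundamental_circuit X x : X \in B -> x \notin X ->
  exists2 C, circuit B C & (x \in C) && (C \subset x |: X).
Proof.
move=> hX xX; have [|C cC sC] := @dependent_has_circuit (x |: X).
  apply/existsP => -[Y /andP[hY sxXY]].
  have eXY := basis_subset_eq hX hY (subset_trans (subsetUr _ _) sxXY).
  by move: xX; rewrite eXY (subsetP sxXY) // setU11.
by exists C; rewrite // sC (circuit_subsetU1_basis cC hX sC).
Qed.

Lemma component_meets_basis X0 X x : X0 \in B -> x \in X0 -> X \in B ->
  X :&: component x != set0.
Proof.
move=> hX0 x0 hX; apply: contraT => /negPn/eqP disjXK.
have notinX y : y \in component x -> y \notin X.
  by move=> yK; apply: contraFN (in_set0 y) => yX; rewrite -disjXK inE yX yK.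
have xK : x \in component x by rewrite inE /same_comp eqxx.
have [C cC /andP[xC sC]] := fundamental_circuit hX (notinX x xK).
rewrite -(negbTE (circuit_not_subset_basis cC hX0)); apply/subsetP => y yC.
move/subsetP/(_ y yC): sC; rewrite in_setU1 => /orP[/eqP -> //|yX].
by move: (notinX y (subsetP (circuit_sub_component cC xC) y yC)); rewrite yX.
Qed.

Lemma component_not_subset_basis X0 X x : X0 \in B -> x \notin X0 -> X \in B ->
  ~: X :&: component x != set0.
Proof.
move=> hX0 x0 hX; rewrite setIC setI_eq0 disjoints_subset setCK.
have [C cC /andP[xC _]] := fundamental_circuit hX0 x0.
apply: contra (circuit_not_subset_basis cC hX) => sKX.
exact: subset_trans (circuit_sub_component cC xC) sKX.
Qed.

Lemma card_component_le x : #|component x| <= #|E| - ncomp B + 1.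
Proof. by have := ncomp_le_componentC x; have := cardsC (component x); lia. Qed.

(* Used with F = id for the bases of M and F = complement for those of its dual. *)
Lemma borsuk_of_disjoint_images (F : {set E} -> {set E}) X1 X2 :
  (forall X Y, bdist (F X) (F Y) = bdist X Y) ->
  {in B &, forall X Y, #|F X| = #|F Y|} ->
  X1 \in B -> X2 \in B -> F X1 != F X2 -> [disjoint F X1 & F X2] ->
  (forall x X, x \in F X1 -> X \in B -> F X :&: component x != set0) ->
  borsuk_property B.
Proof.
move=> bdistF cardF hX1 hX2 n12 d12 meetF.
have /set0Pn[x x1] : F X1 != set0.
  apply: contraNneq n12 => e1.
  by rewrite e1 eq_sym -cards_eq0 -(cardF _ _ hX1 hX2) e1 cards0.
pose g X := odflt x [pick z in F X :&: component x].
have gP X : X \in B -> g X \in F X :&: component x.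
  move/(meetF x X x1)/set0Pn => -[z zXK]; rewrite /g.
  by case: pickP => [y -> //|/(_ z)]; rewrite zXK.
apply: borsuk_leW (card_component_le x) _; apply: (@borsuk_le_classifier _ _ _ g).
  by move=> X /gP; rewrite inE => /andP[].
move=> X Y hX hY gXY; have := gP X hX; have := gP Y hY.
rewrite -gXY !inE => /andP[gY _] /andP[gX _].
have r_gt0 : 0 < #|F X1| by apply/card_gt0P; exists x.
apply: leq_trans (bdist_le_diam hX1 hX2).
rewrite -(bdistF X1 X2) (bdist_disjoint d12) -(cardF _ _ hX1 hX2) -bdistF.
apply: leq_ltn_trans (bdist_le_common gX gY) _.
by rewrite (cardF _ _ hX hX1) (cardF _ _ hY hX1); lia.
Qed.
End MatroidTheory.

Theorem theorem1 (E : finType) (B : {set {set E}}) :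
  matroid_bases B ->
  (has_two_disjoint_bases B \/ has_two_disjoint_bases (dual_bases B)) ->
  borsuk_property B.
Proof.
move=> hB [[X1 [X2 [h1 h2 n12 d12]]] | [D1 [D2 [/imsetP[X1 h1 ->] /imsetP[X2 h2 ->] n12 d12]]]].
  apply: (borsuk_of_disjoint_images (F := id) hB _ _ h1 h2 n12 d12) => //.
    exact: card_bases.
  by move=> x X x1 hX; apply: component_meets_basis h1 x1 hX.
apply: (borsuk_of_disjoint_images (F := @setC E) hB (@bdist_setC E) _ h1 h2 n12 d12).
  by move=> X Y hX hY; rewrite [LHS]cardsCs [RHS]cardsCs !setCK (card_bases hB hX hY).
by move=> x X; rewrite inE => x1 hX; apply: component_not_subset_basis h1 x1 hX.
Qed.
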